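(* Let $\sigma\subseteq[n]$ be an edge or a triangle on $\gamma_2$. Then there is a triangulation $T(\sigma)\in S(n,2)$ such that $\sigma\in T(\sigma)$ and, for every edge or triangle $\tau\subseteq[n]$ with $\tau\ne\sigma$ such that either $\tau$ does not overlap $\sigma$ in $\mathbb{R}^2$ or $\tau<_3\sigma$, we have $\tau\le_3 T(\sigma)$.
   Context: $\gamma_d=\{(t,t^2,\dots,t^d):t\in\mathbb{R}\}$. Fix $t_1<\dots<t_n$ and the points $\gamma_2(t_i)$, identified with $i\in[n]$; $C(n,2)$ is their convex hull (a convex $n$-gon) and $S(n,2)$ the set of triangulations of $C(n,2)$ with vertices in $[n]$. Simplices (edges, triangles) are subsets of $[n]$ identified with their convex hulls; $\sigma,\tau$ overlap if $\mathrm{conv}(\sigma)\cap\mathrm{conv}(\tau)\supsetneq\mathrm{conv}(\sigma\cap\tau)$. The height function $h_\sigma:\mathrm{conv}(\sigma)\to\mathbb{R}$ gives the last coordinate of the point in the convex hull of the lifted points $\gamma_3(t_i)$, $i\in\sigma$, projecting to $p$. $\sigma<_3\tau$ means $\sigma,\tau$ overlap in $\mathbb{R}^2$ and $h_\sigma\le h_\tau$ on the common domain. For $T\in S(n,2)$, $h_T(p)=h_\rho(p)$ for $p\in\mathrm{conv}(\rho)$, $\rho\in T$, and $\tau\le_3T$ means $h_\tau\le h_T$ on $\mathrm{conv}(\tau)$. *)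

From HB Require Import structures.
From mathcomp Require Import all_boot all_order all_algebra.
From mathcomp Require Import reals.
Set Implicit Arguments. Unset Strict Implicit. Unset Printing Implicit Defensive.
Import Order.TTheory GRing.Theory Num.Theory.
Local Open Scope ring_scope.

Section Cyclic.
Variables (R : realType) (n : nat) (t : 'I_n -> R).

Definition convw (S : {set 'I_n}) (l : 'I_n -> R) : Prop :=
  [/\ forall i, 0 <= l i, forall i, i \notin S -> l i = 0 & \sum_i l i = 1].

(* gamma_2(t_i) = (t_i, t_i^2) ; p \in conv(S) *)
Definition in_conv (S : {set 'I_n}) (p : R * R) : Prop :=
  exists l, convw S l /\ p = (\sum_i l i * t i, \sum_i l i * t i ^+ 2).

(* y = h_S(p): last coordinate of the point of conv{gamma_3(t_i) : i in S}
   projecting to p *)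
Definition lifts (S : {set 'I_n}) (p : R * R) (y : R) : Prop :=
  exists l, [/\ convw S l, p = (\sum_i l i * t i, \sum_i l i * t i ^+ 2)
             & y = \sum_i l i * t i ^+ 3].

Definition overlap (s u : {set 'I_n}) : Prop :=
  (forall p, in_conv (s :&: u) p -> in_conv s p /\ in_conv u p) /\
  exists p, [/\ in_conv s p, in_conv u p & ~ in_conv (s :&: u) p].

Definition below3 (s u : {set 'I_n}) : Prop :=
  overlap s u /\ forall p y z, lifts s p y -> lifts u p z -> y <= z.

Definition edge_or_triangle (s : {set 'I_n}) : Prop := #|s| = 2%N \/ #|s| = 3%N.

Definition is_triangulation (T : {set {set 'I_n}}) : Prop :=
  [/\ forall r, r \in T -> #|r| = 3%N,
      forall p, in_conv setT p <-> exists2 r, r \in T & in_conv r p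
    & forall r r', r \in T -> r' \in T -> r != r' -> ~ overlap r r'].

Definition simplex_of (s : {set 'I_n}) (T : {set {set 'I_n}}) : Prop :=
  exists2 r, r \in T & s \subset r.

Definition le3T (s : {set 'I_n}) (T : {set {set 'I_n}}) : Prop :=
  forall r, r \in T -> forall p y z, lifts s p y -> lifts r p z -> y <= z.

End Cyclic.

(* Weights l on the indices, nonnegative and of sum 1, stand for the point
   point_of l = \sum_i l i * gamma_2 (t i) of the plane, and moment l 3 is the
   height of \sum_i l i * gamma_3 (t i); thus tau <_3 sigma amounts to
   lies_below tau sigma.  Everything is decided by summing polynomials in the
   t i against weights: \sum_i l i * p.[t i] only depends on point_of l when
   p has degree at most 2, and for the monic cubic nodal r of a triangle r it
   is the height of the lifting of l above the plane through the lifted r.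

   The upper facets of a set S of vertices, the triangles r with
   (nodal r).[t k] < 0 at all other vertices k of S, triangulate conv S (cut
   off the ear spanned by the two smallest and the largest vertex, and
   induct).  The quadratic nodal [set a; b] is negative exactly at the
   vertices strictly between a and b, so the pieces of the polygon on the two
   sides of the chord ab meet only along it.  T(sigma) consists of sigma and
   of the upper triangulations of the pieces cut off by the edges of sigma.
   If tau lies below sigma but above an upper facet r of the piece cut off by
   an edge ab at some point, then it is also above the plane of r at some
   point of the chord ab; there the plane of r is at least as high as the
   edge ab, so tau would be above sigma. *)

From HB Require Import structures.
From mathcomp Require Import all_boot all_order all_algebra.
From mathcomp Require Import reals.
From mathcomp Require Import ring lra zify.
From Stdlib Require Import Classical_Prop.
Import Order.TTheory GRing.Theory Num.Theory.
Local Open Scope ring_scope.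
Set Implicit Arguments. Unset Strict Implicit. Unset Printing Implicit Defensive.

Lemma mul_subr_le0 (R : realDomainType) (p q x : R) : p < q ->
  ((x - p) * (x - q) <= 0) = (p <= x <= q).
Proof.
by move=> pq; apply/idP/andP => [h|[h1 h2]]; nra.
Qed.

Lemma mul_subr_ge0 (R : realDomainType) (p q x : R) : p < q ->
  (0 <= (x - p) * (x - q)) = (x <= p) || (q <= x).
Proof.
by move=> pq; apply/idP/orP => [h|[h1|h1]]; nra.
Qed.

Section MomentCurve.
Variables (R : realType) (n : nat) (t : 'I_n -> R).
Hypothesis t_increasing : forall i j : 'I_n, (i < j)%N -> t i < t j.
Implicit Types (A B S r s u : {set 'I_n}) (T : {set {set 'I_n}}) (l m : 'I_n -> R).
Implicit Types (a b c d x y z : 'I_n).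

Lemma lt_t (i j : 'I_n) : (t i < t j) = (i < j)%N.
Proof.
case: (ltngtP i j) => [ij|ji|/val_inj ->]; first exact: t_increasing.
- by apply: lt_gtF; exact: t_increasing.
- exact: ltxx.
Qed.

Lemma le_t (i j : 'I_n) : (t i <= t j) = (i <= j)%N.
Proof. by rewrite leNgt lt_t -leqNgt. Qed.

Lemma t_inj : injective t.
Proof. by move=> i j tij; apply/val_inj/eqP; rewrite eqn_leq -!le_t tij lexx. Qed.

Definition moment l (k : nat) := \sum_i l i * t i ^+ k.

Definition point_of l := (moment l 1, moment l 2).

Definition low_moments_eq l m := forall k, (k < 3)%N -> moment l k = moment m k.

Lemma sum_horner_wide l (p : {poly R}) N : (size p <= N)%N ->
  \sum_i l i * p.[t i] = \sum_(k < N) p`_k * moment l k.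
Proof.
move=> hp; under eq_bigr do rewrite (horner_coef_wide _ hp) mulr_sumr.
rewrite exchange_big; apply: eq_bigr => k _; rewrite /moment mulr_sumr.
by apply: eq_bigr => i _; rewrite mulrCA.
Qed.

Lemma sum_horner_eq l m (p : {poly R}) : (size p <= 3)%N ->
  low_moments_eq l m -> \sum_i l i * p.[t i] = \sum_i m i * p.[t i].
Proof.
by move=> hp hlm; rewrite !(sum_horner_wide _ hp); apply: eq_bigr => k _; rewrite hlm.
Qed.

Lemma sum_hornerB_cubic l m (p : {poly R}) : (size p <= 4)%N ->
  low_moments_eq l m ->
  \sum_i l i * p.[t i] - \sum_i m i * p.[t i] = p`_3 * (moment l 3 - moment m 3).
Proof.
move=> hp hlm; rewrite !(sum_horner_wide _ hp) !big_ord_recr !big_ord0 /=.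
by rewrite (hlm 0%N) // (hlm 1%N) // (hlm 2%N) //; ring.
Qed.

Lemma convw_out A l i : convw A l -> i \notin A -> l i = 0.
Proof. by case=> _ + _; apply. Qed.

Lemma convw_mem A l i : convw A l -> l i != 0 -> i \in A.
Proof. by move=> hl; apply: contraR => /(convw_out hl) ->. Qed.

Lemma convw_support A B l : convw A l -> (forall i, l i != 0 -> i \in B) -> convw B l.
Proof.
by case=> l0 _ l1 hB; split=> // i; apply: contraNeq => /hB.
Qed.

Lemma convwS A B l : A \subset B -> convw A l -> convw B l.
Proof. by move=> AB hl; apply: (convw_support hl) => i /(convw_mem hl)/(subsetP AB). Qed.

Lemma in_convS A B p : A \subset B -> in_conv t A p -> in_conv t B p.
Proof. by move=> AB [l [hl ->]]; exists l; split=> //; exact: convwS hl. Qed.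

Lemma convw_moment0 A l : convw A l -> moment l 0 = 1.
Proof. by case=> _ _ <-; apply: eq_bigr => i _; rewrite mulr1. Qed.

Lemma convw_low_moments A B l m : convw A l -> convw B m ->
  point_of l = point_of m -> low_moments_eq l m.
Proof.
move=> hl hm [e1 e2] [|[|[|k]]] // _.
by rewrite (convw_moment0 hl) (convw_moment0 hm).
Qed.

Lemma convw_term_le0 A l (f : 'I_n -> R) : convw A l -> {in A, forall i, f i <= 0} ->
  forall i, l i * f i <= 0.
Proof.
move=> hl hf i; case: (boolP (i \in A)) => iA; last by rewrite (convw_out hl iA) mul0r.
by case: hl => l0 _ _; rewrite mulr_ge0_le0 ?hf.
Qed.

Lemma convw_sum_le0 A l (f : 'I_n -> R) : convw A l -> {in A, forall i, f i <= 0} ->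
  \sum_i l i * f i <= 0.
Proof. by move=> hl hf; apply: sumr_le0 => i _; exact: convw_term_le0 hl hf i. Qed.

Lemma convw_sum_ge0 A l (f : 'I_n -> R) : convw A l -> {in A, forall i, 0 <= f i} ->
  0 <= \sum_i l i * f i.
Proof.
move=> hl hf; rewrite -oppr_le0 -sumrN.
under eq_bigr do rewrite -mulrN.
by apply: convw_sum_le0 hl _ => i /hf; rewrite oppr_le0.
Qed.

Lemma convw_sum_eq0 A l (f : 'I_n -> R) : convw A l -> {in A, forall i, f i <= 0} ->
  \sum_i l i * f i = 0 -> convw (A :&: [set i | f i == 0]) l.
Proof.
move=> hl hf hs; apply: (convw_support hl) => i li; rewrite !inE (convw_mem hl li) /=.
have term_ge0 j : 0 <= - (l j * f j) by rewrite oppr_ge0 (convw_term_le0 hl hf).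
have := @psumr_eq0P _ _ xpredT _ (fun j _ => term_ge0 j).
rewrite sumrN hs oppr0 => /(_ erefl i isT)/eqP.
by rewrite oppr_eq0 mulf_eq0 (negbTE li).
Qed.

Definition nodal (B : {set 'I_n}) : {poly R} := \prod_(j in B) ('X - (t j)%:P).

Lemma size_nodal B : size (nodal B) = #|B|.+1.
Proof. by rewrite /nodal -big_filter size_prod_XsubC cardE /enum_mem. Qed.

Lemma nodalE B (x : R) : (nodal B).[x] = \prod_(j in B) (x - t j).
Proof. by rewrite /nodal horner_prod; apply: eq_bigr => j _; rewrite hornerXsubC. Qed.

Lemma nodal_eq0 B k : ((nodal B).[t k] == 0) = (k \in B).
Proof.
rewrite nodalE; apply/prodf_eq0/idP => [[j jB]|kB]; last by exists k; rewrite ?subrr.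
by rewrite subr_eq0 (inj_eq t_inj) => /eqP ->.
Qed.

Lemma nodal_root B k : k \in B -> (nodal B).[t k] = 0.
Proof. by rewrite -nodal_eq0 => /eqP. Qed.

Lemma nodal_zero_set B : [set i | (nodal B).[t i] == 0] = B.
Proof. by apply/setP => i; rewrite inE nodal_eq0. Qed.

Lemma nodal2E a b (x : R) : a != b -> (nodal [set a; b]).[x] = (x - t a) * (x - t b).
Proof. by move=> ab; rewrite nodalE big_setU1 ?big_set1 // inE. Qed.

Lemma nodal3E a b c (x : R) : a != b -> a != c -> b != c ->
  (nodal [set a; b; c]).[x] = (x - t a) * (x - t b) * (x - t c).
Proof.
move=> ab ac bc; rewrite nodalE -setUA big_setU1 ?big_setU1 ?big_set1 /=.
- by rewrite mulrA.
- by rewrite inE.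
- by rewrite !inE negb_or ab.
Qed.

Lemma convw_point_inj A l m : (#|A| <= 3)%N -> convw A l -> convw A m ->
  point_of l = point_of m -> l =1 m.
Proof.
move=> hA hl hm hlm k; case: (boolP (k \in A)) => [kA|kA]; last first.
  by rewrite (convw_out hl kA) (convw_out hm kA).
pose p := nodal (A :\ k).
have size_p : (size p <= 3)%N by move: hA; rewrite size_nodal (cardsD1 k A) kA add1n.
have sum_p w : convw A w -> \sum_i w i * p.[t i] = w k * p.[t k].
  move=> hw; rewrite (bigD1 k) //= big1 ?addr0 // => i ik.
  case: (boolP (i \in A)) => iA; last by rewrite (convw_out hw iA) mul0r.
  by rewrite nodal_root ?mulr0 // !inE ik.
have := sum_horner_eq size_p (convw_low_moments hl hm hlm).
by rewrite !sum_p //; apply: mulIf; rewrite nodal_eq0 setD11.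
Qed.

Lemma ltn_ord_neq (i j : 'I_n) : (i < j)%N -> i != j.
Proof. by apply: contraTneq => ->; rewrite ltnn. Qed.

Definition inner (a b : 'I_n) := [set k : 'I_n | (a <= k <= b)%N].
Definition outer (a b : 'I_n) := [set k : 'I_n | (k <= a)%N || (b <= k)%N].

Lemma inner_nodal2 a b (k : 'I_n) : (a < b)%N ->
  (k \in inner a b) = ((nodal [set a; b]).[t k] <= 0).
Proof. by move=> ab; rewrite inE nodal2E ?ltn_ord_neq // mul_subr_le0 ?lt_t // !le_t. Qed.

Lemma outer_nodal2 a b (k : 'I_n) : (a < b)%N ->
  (k \in outer a b) = (0 <= (nodal [set a; b]).[t k]).
Proof. by move=> ab; rewrite inE nodal2E ?ltn_ord_neq // mul_subr_ge0 ?lt_t // !le_t. Qed.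

Lemma moment_subZ l (d : 'I_n -> R) (c : R) k :
  moment (fun j => l j - c * d j) k = moment l k - c * moment d k.
Proof. by rewrite /moment mulr_sumr -sumrB; apply: eq_bigr => i _; ring. Qed.

Lemma moment_opp (d : 'I_n -> R) k : moment (fun j => - d j) k = - moment d k.
Proof. by rewrite /moment -sumrN; apply: eq_bigr => i _; rewrite mulNr. Qed.

Lemma exchange_weights A l (d : 'I_n -> R) x y : convw A l ->
  (forall j, d j != 0 -> j \in A) -> (forall k, (k < 3)%N -> moment d k = 0) ->
  (forall j, (0 < d j) = (j \in [set x; y])) ->
  exists l', [/\ convw A l', point_of l' = point_of l, (l' x == 0) || (l' y == 0) &
    forall j, l' j != 0 -> (l j != 0) || (d j != 0)].
Proof.
move=> hl dA d0 dpos; case: (hl) => l0 lA l1.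
have [dx dy] : 0 < d x /\ 0 < d y by split; rewrite dpos !inE eqxx ?orbT.
pose c := Order.min (l x / d x) (l y / d y).
have c_ge0 : 0 <= c by rewrite /c le_min !divr_ge0 ?l0 ?ltW.
exists (fun j => l j - c * d j); split.
- split.
  + move=> j; rewrite subr_ge0; case: (boolP (j \in [set x; y])) => [|jxy].
      by rewrite !inE => /orP[]/eqP->; rewrite -ler_pdivlMr // /c ge_min lexx ?orbT.
    apply: le_trans (l0 j); apply: mulr_ge0_le0 => //.
    by rewrite leNgt dpos (negbTE jxy).
  + move=> j jA; rewrite (lA j jA); apply/eqP; rewrite subr_eq0 eq_sym mulf_eq0.
    by apply/orP; right; apply: contraR jA; apply: dA.
  + by move: (d0 0%N isT); rewrite /moment; under eq_bigr do rewrite mulr1;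
      move=> d_sum; rewrite sumrB -mulr_sumr d_sum mulr0 subr0.
- by rewrite /point_of !moment_subZ !d0 // !mulr0 !subr0.
- by rewrite /c /=; case: leP => _; rewrite divfK ?subrr ?eqxx ?orbT // gt_eqF.
- move=> j; apply: contraR; rewrite negb_or !negbK => /andP[/eqP -> /eqP ->].
  by rewrite mulr0 subrr.
Qed.

Lemma sum_indicator x (F : 'I_n -> R) : \sum_j (j == x)%:R * F j = F x.
Proof.
rewrite (bigD1 x) //= eqxx mul1r big1 ?addr0 // => j /negbTE ->.
by rewrite mul0r.
Qed.

(* The cofactors of the Vandermonde determinant of t x1, ..., t x4: the affine
   dependence of four points of the parabola, with alternating signs. *)
Definition radon_weights (x1 x2 x3 x4 j : 'I_n) : R :=
  let: (X1, X2, X3, X4) := (t x1, t x2, t x3, t x4) in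
    (j == x1)%:R * ((X3 - X2) * (X4 - X2) * (X4 - X3))
  - (j == x2)%:R * ((X3 - X1) * (X4 - X1) * (X4 - X3))
  + (j == x3)%:R * ((X2 - X1) * (X4 - X1) * (X4 - X2))
  - (j == x4)%:R * ((X2 - X1) * (X3 - X1) * (X3 - X2)).

Lemma moment_radon_weights x1 x2 x3 x4 k : (k < 3)%N ->
  moment (radon_weights x1 x2 x3 x4) k = 0.
Proof.
move=> k3; rewrite /moment /radon_weights.
under eq_bigr do rewrite !mulrDl !mulNr -!mulrA.
rewrite !big_split /= !sumrN !sum_indicator.
by case: k k3 => [|[|[|]]] // _; ring.
Qed.

Lemma radon_dependence x1 x2 x3 x4 : (x1 < x2)%N -> (x2 < x3)%N -> (x3 < x4)%N ->
  let d := radon_weights x1 x2 x3 x4 in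
  [/\ forall j, d j != 0 -> j \in [set x1; x2; x3; x4],
      forall j, (0 < d j) = (j \in [set x1; x3]) &
      forall j, (d j < 0) = (j \in [set x2; x4])].
Proof.
move=> h12 h23 h34 d.
have [t12 t23 t34] : [/\ t x1 < t x2, t x2 < t x3 & t x3 < t x4] by rewrite !lt_t.
have neq (i j : 'I_n) : (i < j)%N -> (i == j) = false /\ (j == i) = false.
  move=> ij; have /negbTE ne := ltn_ord_neq ij.
  by split; last rewrite eq_sym.
have h13 := ltn_trans h12 h23; have h24 := ltn_trans h23 h34.
have [[e12 e21] [e13 e31] [e14 e41]] :=
  And3 (neq _ _ h12) (neq _ _ h13) (neq _ _ (ltn_trans h13 h34)).
have [[e23 e32] [e24 e42] [e34 e43]] := And3 (neq _ _ h23) (neq _ _ h24) (neq _ _ h34).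
set c1 := (t x3 - t x2) * (t x4 - t x2) * (t x4 - t x3).
set c2 := (t x3 - t x1) * (t x4 - t x1) * (t x4 - t x3).
set c3 := (t x2 - t x1) * (t x4 - t x1) * (t x4 - t x2).
set c4 := (t x2 - t x1) * (t x3 - t x1) * (t x3 - t x2).
have [p1 p2 p3 p4] : [/\ 0 < c1, 0 < c2, 0 < c3 & 0 < c4].
  by split; rewrite !mulr_gt0 // subr_gt0; lra.
have dE j : d j = if j == x1 then c1 else if j == x2 then - c2
    else if j == x3 then c3 else if j == x4 then - c4 else 0.
  rewrite /d /radon_weights -/c1 -/c2 -/c3 -/c4.
  by case: (eqVneq j x1) => [->|_]; last case: (eqVneq j x2) => [->|_];
    last case: (eqVneq j x3) => [->|_]; last case: (eqVneq j x4) => [_|_];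
    rewrite ?(e12, e13, e14, e21, e23, e24, e31, e32, e34, e41, e42, e43) /=; ring.
have sign_d j : (0 < d j) = (j \in [set x1; x3]) /\ (d j < 0) = (j \in [set x2; x4]).
  rewrite dE !inE.
  case: (eqVneq j x1) => [->|_]; last case: (eqVneq j x2) => [->|_];
    last case: (eqVneq j x3) => [->|_]; last case: (eqVneq j x4) => [_|_];
    rewrite ?(e12, e13, e14, e21, e23, e24, e31, e32, e34, e41, e42, e43) /=;
    by rewrite ?oppr_gt0 ?oppr_lt0 ?ltxx ?(lt_gtF p1) ?(lt_gtF p2) ?(lt_gtF p3) ?(lt_gtF p4).
split=> j; [|exact: (sign_d j).1|exact: (sign_d j).2].
rewrite neq_lt (sign_d j).1 (sign_d j).2 !inE -!orbA.
by case/or4P=> /eqP->; rewrite !eqxx ?orbT.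
Qed.

Definition off_chord a b l := [set j | l j != 0] :\: [set a; b].

Lemma off_chord_proper a b l l' x y : x \in off_chord a b l -> y \in off_chord a b l ->
  (l' x == 0) || (l' y == 0) ->
  (forall j, l' j != 0 -> (l j != 0) || (j \in [set a; b; x; y])) ->
  off_chord a b l' \proper off_chord a b l.
Proof.
move=> xl yl l'xy supp; apply/properP; split.
  apply/subsetP => j; rewrite !inE => /andP[jab /supp]; rewrite !inE (negbTE jab) /=.
  by case/or3P=> [//|/eqP->|/eqP->]; [move: xl|move: yl]; rewrite !inE => /andP[].
by case/orP: l'xy => /eqP l'0; [exists x | exists y]; rewrite // !inE l'0 eqxx andbF.
Qed.

Lemma off_chord_shrink A l a b x y : (a < b)%N -> a \in A -> b \in A -> convw A l ->
  l x != 0 -> (a < x < b)%N -> l y != 0 -> ((y < a) || (b < y))%N ->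
  exists l', [/\ convw A l', point_of l' = point_of l &
                 off_chord a b l' \proper off_chord a b l].
Proof.
move=> ab aA bA hl lx /andP[ax xb] ly hy.
have off_chord_mem j : l j != 0 -> (j < a)%N || (a < j < b)%N || (b < j)%N ->
    j \in off_chord a b l.
  move=> lj hj; rewrite !inE lj andbT negb_or.
  by apply/andP; split; apply/eqP => e; move: hj; rewrite e; lia.
have off_x := off_chord_mem x lx ltac:(lia).
have off_y := off_chord_mem y ly ltac:(lia).
have xA := convw_mem hl lx; have yA := convw_mem hl ly.
case/orP: hy => [ya|by_].
- have [supp pos _] := radon_dependence ya ax xb.
  have dA j : radon_weights y a x b j != 0 -> j \in A.
    by move/supp; rewrite !inE -!orbA => /or4P[]/eqP->.
  have [l' [hl' e' l'0 hsupp]] := exchange_weights hl dA (moment_radon_weights y a x b) pos.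
  exists l'; split=> //; apply: (off_chord_proper off_y off_x l'0).
  move=> j /hsupp /orP[->//|/supp]; rewrite !inE.
  by case: (j == y); case: (j == a); case: (j == x); case: (j == b); rewrite ?orbT.
- have [supp _ neg] := radon_dependence ax xb by_.
  pose d j := - radon_weights a x b y j.
  have dA j : d j != 0 -> j \in A.
    by rewrite oppr_eq0 => /supp; rewrite !inE -!orbA => /or4P[]/eqP->.
  have d0 k : (k < 3)%N -> moment d k = 0.
    by move=> k3; rewrite moment_opp moment_radon_weights ?oppr0.
  have pos j : (0 < d j) = (j \in [set x; y]) by rewrite oppr_gt0 neg.
  have [l' [hl' e' l'0 hsupp]] := exchange_weights hl dA d0 pos.
  exists l'; split=> //; apply: (off_chord_proper off_x off_y l'0).
  move=> j /hsupp /orP[->//|]; rewrite oppr_eq0 => /supp; rewrite !inE.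
  by case: (j == y); case: (j == a); case: (j == x); case: (j == b); rewrite ?orbT.
Qed.

(* Radon exchanges between a vertex strictly inside (a, b) and one strictly
   outside shrink off_chord until one of the two sides is empty. *)
Lemma split_chord A l a b : (a < b)%N -> a \in A -> b \in A -> convw A l ->
  exists l', point_of l' = point_of l /\
    (convw (A :&: inner a b) l' \/ convw (A :&: outer a b) l').
Proof.
move=> ab aA bA hl; have [N ltN] := ubnP #|off_chord a b l|.
elim: N l ltN hl => // N IH l ltN hl.
have in_piece (P : {set 'I_n}) : (forall j, l j != 0 -> j \in P) -> convw (A :&: P) l.
  by move=> hP; apply: (convw_support hl) => j lj; rewrite inE (convw_mem hl lj) hP.
case: (boolP [exists x, (l x != 0) && (a < x < b)%N]) => [|/existsPn no_inside]; last first.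
  exists l; split=> //; right; apply: in_piece => j lj.
  by move: (no_inside j); rewrite lj inE /=; lia.
case: (boolP [exists y, (l y != 0) && ((y < a) || (b < y))%N]);
  last move=> /existsPn no_outside; last first.
  exists l; split=> //; left; apply: in_piece => j lj.
  by move: (no_outside j); rewrite lj inE /=; lia.
case/existsP=> y /andP[ly hy] /existsP[x /andP[lx hx]].
have [l' [hl' e' lt']] := off_chord_shrink ab aA bA hl lx hx ly hy.
have [l'' [e'' hl'']] := IH l' (leq_trans (proper_card lt') ltN) hl'.
by exists l''; rewrite e'' e'.
Qed.

Definition meet_in_face A B :=
  forall p, in_conv t A p -> in_conv t B p -> in_conv t (A :&: B) p.

Lemma meet_in_face_sym A B : meet_in_face A B -> meet_in_face B A.
Proof. by move=> h p hB hA; rewrite setIC; apply: h. Qed.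

Lemma meet_in_face_no_overlap A B : meet_in_face A B -> ~ overlap t A B.
Proof. by move=> h [_ [p [hA hB]]]; apply; apply: h. Qed.

Lemma convw_chord A l a b : (a < b)%N ->
  (A \subset inner a b) || (A \subset outer a b) -> convw A l ->
  \sum_i l i * (nodal [set a; b]).[t i] = 0 -> convw (A :&: [set a; b]) l.
Proof.
move=> ab /orP[/subsetP AI|/subsetP AO] hl h0.
  have := convw_sum_eq0 hl _ h0; rewrite nodal_zero_set; apply.
  by move=> i /AI; rewrite inner_nodal2.
have h0' : \sum_i l i * - (nodal [set a; b]).[t i] = 0.
  by under eq_bigr do rewrite mulrN; rewrite sumrN h0 oppr0.
have -> : [set a; b] = [set i | - (nodal [set a; b]).[t i] == 0].
  by apply/setP => i; rewrite inE oppr_eq0 nodal_eq0.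
by apply: convw_sum_eq0 hl _ h0' => i /AO; rewrite outer_nodal2 // oppr_le0.
Qed.

Lemma cards2_le a b : (#|[set a; b]| <= 2)%N.
Proof. by rewrite cards2; case: (a != b). Qed.

Lemma size_nodal2 a b : (size (nodal [set a; b]) <= 3)%N.
Proof. by rewrite size_nodal ltnS cards2_le. Qed.

Lemma on_chord A l a b : (a < b)%N -> a \in A -> b \in A -> convw A l ->
  \sum_i l i * (nodal [set a; b]).[t i] = 0 ->
  exists2 m, convw [set a; b] m & point_of m = point_of l.
Proof.
move=> ab aA bA hl h0; have [m [e hm]] := split_chord ab aA bA hl.
exists m => //.
have m0 P : convw (A :&: P) m -> \sum_i m i * (nodal [set a; b]).[t i] = 0.
  by move=> hmP; rewrite (sum_horner_eq (size_nodal2 a b) (convw_low_moments hmP hl e)).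
by case: hm => hm; apply: convwS (subsetIr _ _) (convw_chord ab _ hm (m0 _ hm));
  rewrite subsetIr ?orbT.
Qed.

Lemma meet_in_face_chord A B a b : (a < b)%N ->
  A \subset inner a b -> B \subset outer a b -> meet_in_face A B.
Proof.
move=> ab AI BO p [l [hl ->]] [m [hm e]].
have L_eq := sum_horner_eq (size_nodal2 a b) (convw_low_moments hl hm e).
have l_le0 : \sum_i l i * (nodal [set a; b]).[t i] <= 0.
  by apply: convw_sum_le0 hl _ => i /(subsetP AI); rewrite inner_nodal2.
have m_ge0 : 0 <= \sum_i m i * (nodal [set a; b]).[t i].
  by apply: convw_sum_ge0 hm _ => i /(subsetP BO); rewrite outer_nodal2.
have l0 : \sum_i l i * (nodal [set a; b]).[t i] = 0.
  by apply/eqP; rewrite eq_le l_le0 L_eq m_ge0.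
have hl' : convw (A :&: [set a; b]) l by apply: convw_chord ab _ hl l0; rewrite AI.
have hm' : convw (B :&: [set a; b]) m.
  by apply: convw_chord ab _ hm _; rewrite ?BO ?orbT // -L_eq.
have lm : l =1 m.
  exact: convw_point_inj (leqW (cards2_le a b)) (convwS (subsetIr _ _) hl')
                          (convwS (subsetIr _ _) hm') e.
exists l; split=> //; apply: (convw_support hl) => i li.
rewrite inE (convw_mem hl li) /=.
by apply: (subsetP (subsetIl B [set a; b])); apply: (convw_mem hm'); rewrite -lm.
Qed.

Lemma nodal3_lt0 x y z (k : 'I_n) : (x < y)%N -> (y < z)%N ->
  ((k < x)%N || (y < k < z)%N) -> (nodal [set x; y; z]).[t k] < 0.
Proof.
move=> xy yz hk; have xz := ltn_trans xy yz.
rewrite nodal3E ?ltn_ord_neq //.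
have [t_xy t_yz] : t x < t y /\ t y < t z by rewrite !lt_t.
case/orP: hk => [kx|/andP[yk kz]].
- have kx' : t k < t x by rewrite lt_t.
  have : 0 < (t k - t x) * (t k - t y) by nra.
  nra.
- have [yk' kz'] : t y < t k /\ t k < t z by rewrite !lt_t.
  have : 0 < (t k - t x) * (t k - t y) by nra.
  nra.
Qed.

Lemma set_min S x0 : x0 \in S -> exists2 a, a \in S & {in S, forall k : 'I_n, (a <= k)%N}.
Proof. by move=> x0S; case: (arg_minnP (fun i : 'I_n => val i) x0S) => a; exists a. Qed.

Lemma set_max S x0 : x0 \in S -> exists2 a, a \in S & {in S, forall k : 'I_n, (k <= a)%N}.
Proof. by move=> x0S; case: (arg_maxnP (fun i : 'I_n => val i) x0S) => a; exists a. Qed.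

Lemma card3_sorted r : #|r| = 3 ->
  exists x y z, [/\ (x < y)%N, (y < z)%N & r = [set x; y; z]].
Proof.
move=> r3; have [x0 x0r] : exists x0, x0 \in r by apply/card_gt0P; rewrite r3.
have [x xr xmin] := set_min x0r.
have /cards2P[y [z [yz ryz]]] : #|r :\ x| == 2.
  by move: r3; rewrite (cardsD1 x) xr add1n => -[->].
have rE : r = [set x; y; z] by rewrite -setUA -ryz setD1K.
have above j : j \in r :\ x -> (x < j)%N.
  rewrite !inE => /andP[jx /xmin]; rewrite leq_eqVlt => /orP[/eqP/val_inj xj|//].
  by rewrite xj eqxx in jx.
have [xy xz] : (x < y)%N /\ (x < z)%N by split; apply: above; rewrite ryz !inE eqxx ?orbT.
case: (ltngtP y z) => [y_z|z_y|/val_inj y_z]; last by move: yz; rewrite y_z eqxx.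
- by exists x, y, z.
- by exists x, z, y; split=> //; rewrite rE; apply/setP => j; rewrite !inE orbAC.
Qed.

Lemma card3_set x y z : (x < y)%N -> (y < z)%N -> #|[set x; y; z]| = 3.
Proof.
move=> xy yz; rewrite -setUA cardsU1 cards2 !inE ltn_ord_neq //.
by rewrite negb_or !ltn_ord_neq // (ltn_trans xy yz).
Qed.

Definition upper_facets (S : {set 'I_n}) : {set {set 'I_n}} :=
  [set r : {set 'I_n} | [&& r \subset S, #|r| == 3 & [forall k in S :\: r, (nodal r).[t k] < 0]]].

Lemma upper_facetP S r : reflect
  [/\ r \subset S, #|r| = 3 & {in S :\: r, forall k, (nodal r).[t k] < 0}]
  (r \in upper_facets S).
Proof.
rewrite inE; apply: (iffP and3P) => [[rS /eqP r3 /forall_inP]|[rS r3 /forall_inP]] //.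
by split=> //; apply/eqP.
Qed.

Lemma upper_facet_sub S r : r \in upper_facets S -> r \subset S.
Proof. by case/upper_facetP. Qed.

Lemma upper_facet_card S r : r \in upper_facets S -> #|r| = 3.
Proof. by case/upper_facetP. Qed.

Lemma upper_facet_le0 S r : r \in upper_facets S -> {in S, forall k, (nodal r).[t k] <= 0}.
Proof.
case/upper_facetP=> _ _ neg k kS; case: (boolP (k \in r)) => kr.
  by rewrite nodal_root.
by apply/ltW/neg; rewrite inE kr.
Qed.

Lemma sum_nodal3B r l m : #|r| = 3 -> low_moments_eq l m ->
  \sum_i l i * (nodal r).[t i] - \sum_i m i * (nodal r).[t i] = moment l 3 - moment m 3.
Proof.
move=> r3 lm; rewrite sum_hornerB_cubic ?size_nodal ?r3 //.
have /monicP := monic_prod_XsubC (index_enum 'I_n) (mem r) t.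
by rewrite lead_coefE size_nodal r3 => ->; rewrite mul1r.
Qed.

Lemma sum_nodal3_height A r l m : #|r| = 3 -> convw A l -> convw r m ->
  point_of l = point_of m -> \sum_i l i * (nodal r).[t i] = moment l 3 - moment m 3.
Proof.
move=> r3 hl hm e; rewrite -(sum_nodal3B r3 (convw_low_moments hl hm e)).
suff -> : \sum_i m i * (nodal r).[t i] = 0 by rewrite subr0.
apply: big1 => i _; case: (boolP (i \in r)) => ir; first by rewrite nodal_root ?mulr0.
by rewrite (convw_out hm ir) mul0r.
Qed.

Lemma upper_facets_meet_in_face S r r' : r \in upper_facets S -> r' \in upper_facets S ->
  meet_in_face r r'.
Proof.
move=> hr hr' p [l [hl ->]] [m [hm e]].
have gap_l := sum_nodal3_height (upper_facet_card hr') hl hm e.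
have gap_m := sum_nodal3_height (upper_facet_card hr) hm hl (esym e).
have facet_le0 r0 r1 : r0 \in upper_facets S -> r1 \in upper_facets S ->
    {in r1, forall k, (nodal r0).[t k] <= 0}.
  by move=> h0 /upper_facet_sub/subsetP r1S k /r1S; exact: upper_facet_le0 h0 k.
have l_le0 := facet_le0 _ _ hr' hr.
have m_le0 := convw_sum_le0 hm (facet_le0 _ _ hr hr').
have l0 : \sum_i l i * (nodal r').[t i] = 0.
  apply/eqP; rewrite eq_le (convw_sum_le0 hl l_le0) gap_l.
  by rewrite -oppr_le0 opprB -gap_m.
have := convw_sum_eq0 hl l_le0 l0; rewrite nodal_zero_set => hl'.
by exists l.
Qed.

Lemma meet_in_face_region T S (P : {set 'I_n}) :
  {in T, forall r, (r \in upper_facets S) || (r \subset P)} ->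
  (forall A B, A \subset S -> B \subset P -> meet_in_face A B) ->
  {in T &, forall r r', (r \in upper_facets S) || (r' \in upper_facets S) -> meet_in_face r r'}.
Proof.
move=> region sep; have facet r0 r1 : r0 \in upper_facets S -> r1 \in T -> meet_in_face r0 r1.
  move=> h0 /region/orP[h1|r1P]; first exact: upper_facets_meet_in_face h0 h1.
  exact: sep (upper_facet_sub h0) r1P.
by move=> r r' rT r'T /orP[hr|hr']; [apply: facet | apply/meet_in_face_sym/facet].
Qed.

Lemma small_set_sub2 S x y : x != y -> x \in S -> y \in S -> (#|S| <= 2)%N ->
  S \subset [set x; y].
Proof.
move=> xy xS yS S2; have sub : [set x; y] \subset S by rewrite subUset !sub1set xS.
by rewrite -(eqP (_ : [set x; y] == S)) // eqEcard sub cards2 xy.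
Qed.

Lemma sorted_ear S : (3 <= #|S|)%N -> exists a b d,
  [/\ (a < b)%N, (b < d)%N, [set a; b; d] \subset S &
      {in S :\ a, forall k : 'I_n, (b <= k <= d)%N}].
Proof.
move=> S3; have [x0 x0S] : exists x0, x0 \in S by apply/card_gt0P; apply: leq_trans S3.
have [a aS amin] := set_min x0S.
have S3' : (2 <= #|S :\ a|)%N by move: S3; rewrite (cardsD1 a) aS.
have [y0 y0S] : exists y0, y0 \in S :\ a by apply/card_gt0P; apply: leq_trans S3'.
have [b bSa bmin] := set_min y0S; have /setD1P[ba bS] := bSa.
have [d dS dmax] := set_max x0S.
have [c0 /setD1P[c0b c0Sa]] : exists c0, c0 \in S :\ a :\ b.
  by apply/card_gt0P; move: S3'; rewrite (cardsD1 b) bSa.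
exists a, b, d; split.
- by rewrite ltn_neqAle (amin _ bS) andbT eq_sym.
- have := bmin _ c0Sa; have /setD1P[_ /dmax] := c0Sa.
  by move: c0b; rewrite -val_eqE /=; lia.
- by rewrite !subUset !sub1set aS bS dS.
- by move=> k kSa; rewrite bmin //; have /setD1P[_ /dmax] := kSa.
Qed.

Lemma upper_facet_ear S a b d : (a < b)%N -> (b < d)%N -> [set a; b; d] \subset S ->
  {in S :\ a, forall k : 'I_n, (b <= k <= d)%N} -> [set a; b; d] \in upper_facets S.
Proof.
move=> ab bd abdS between; apply/upper_facetP; split=> //; first exact: card3_set.
move=> k; rewrite !inE => /andP[/norP[/norP[ka kb] kd] kS].
apply: nodal3_lt0 => //; have := between k; rewrite !inE ka kS => /(_ isT).
by move: kb kd; rewrite -!val_eqE /=; lia.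
Qed.

Lemma upper_facets_lift S S' r : S' \subset S ->
  {in S :\: S', forall k : 'I_n, {in S', forall j : 'I_n, (k < j)%N}} ->
  r \in upper_facets S' -> r \in upper_facets S.
Proof.
move=> /subsetP S'S below /upper_facetP[rS' r3 neg]; apply/upper_facetP; split=> //.
  by apply/subsetP => j /(subsetP rS') /S'S.
move=> k; rewrite inE => /andP[kr kS].
case: (boolP (k \in S')) => kS'; first by apply: neg; rewrite inE kr.
have [x [y [z [xy yz rE]]]] := card3_sorted r3.
rewrite rE; apply: nodal3_lt0 => //; apply/orP; left; apply: below; first by rewrite inE kS' kS.
by apply: (subsetP rS'); rewrite rE !inE eqxx.
Qed.

Lemma upper_facets_cover S l : (3 <= #|S|)%N -> convw S l ->
  exists2 r, r \in upper_facets S & in_conv t r (point_of l).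
Proof.
have [N ltN] := ubnP #|S|; elim: N S ltN l => // N IH S ltN l S3 hl.
have [a [b [d [ab bd abdS between]]]] := sorted_ear S3.
have [aS bS dS] : [/\ a \in S, b \in S & d \in S].
  by rewrite !(subsetP abdS) // !inE eqxx ?orbT.
have ear := upper_facet_ear ab bd abdS between.
have [l' [e [hl'|hl']]] := split_chord bd bS dS hl; last first.
  exists [set a; b; d] => //; exists l'; split; last by rewrite -e.
  apply: convwS hl'; apply/subsetP => k; rewrite !inE => /andP[kS kbd].
  have [//|ka] := eqVneq k a; have := between k; rewrite !inE ka kS => /(_ isT).
  by move: kbd; rewrite -!val_eqE /=; lia.
set S' := S :&: inner b d in hl'.
have [bS' dS'] : b \in S' /\ d \in S' by rewrite !inE bS dS !leqnn ltnW.
have aS' : a \notin S' by rewrite !inE aS /= leqNgt ab.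
have S'S : S' \subset S by apply: subsetIl.
case: (leqP 3 #|S'|) => [S'3|S'2].
  have [|r hr hrl] := IH S' _ l' S'3 hl'.
    have ltS : (#|S'| < #|S|)%N by apply/proper_card/properP; split=> //; exists a.
    by apply: leq_trans ltS _; rewrite -ltnS.
  exists r; last by rewrite -e.
  apply: upper_facets_lift S'S _ hr => k; rewrite inE => /andP[kS' kS] j.
  rewrite !inE => /andP[_ /andP[bj _]].
  have ka : k = a by apply/eqP; apply: contraNT kS' => ka; rewrite !inE kS between // !inE ka.
  by rewrite ka (leq_trans ab bj).
exists [set a; b; d] => //; exists l'; split; last by rewrite -e.
apply: convwS hl'; apply: subset_trans (small_set_sub2 (ltn_ord_neq bd) bS' dS' _) _.
  by rewrite -ltnS.
by rewrite subUset !sub1set !inE !eqxx !orbT.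
Qed.

Lemma crossing_coefficients (F : realFieldType) (mI mO PI PO GI GO : F) :
  0 <= mO -> mI + mO = 1 -> PI + PO <= 0 -> 0 < PO -> GI <= 0 -> 0 < GI + GO ->
  0 < PO * mI - PI * mO /\ 0 < PO * GI - PI * GO.
Proof.
move=> mO0 mIO PIO PO0 GI0 GIO; have GO0 : 0 < GO by lra.
have -> : PO * mI - PI * mO = PO - (PI + PO) * mO by rewrite -[mI](addrK mO) mIO; ring.
have -> : PO * GI - PI * GO = PO * (GI + GO) - (PI + PO) * GO by ring.
by split; nra.
Qed.

Lemma sum_pos_side_eq0 (w psi c : 'I_n -> R) : (forall i, 0 <= w i) ->
  (forall i, w i != 0 -> 0 < psi i) -> \sum_i w i * psi i = 0 -> \sum_i w i * c i = 0.
Proof.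
move=> w0 w_psi sum0; have term_ge0 i : 0 <= w i * psi i.
  by have [->|/w_psi/ltW] := eqVneq (w i) 0; rewrite ?mul0r // => /(mulr_ge0 (w0 i)).
apply: big1 => i _; have /eqP := @psumr_eq0P _ _ xpredT _ (fun i _ => term_ge0 i) sum0 i isT.
rewrite mulf_eq0 => /orP[/eqP->|psi0]; first by rewrite mul0r.
have [->|/w_psi] := eqVneq (w i) 0; first by rewrite mul0r.
by rewrite lt_def psi0.
Qed.

(* q is the point where the segment joining the normalized parts of l on the
   two sides of psi = 0 crosses psi = 0. *)
Lemma convex_crossing A l (psi c : 'I_n -> R) : convw A l ->
  \sum_i l i * psi i <= 0 -> 0 < \sum_i l i * c i -> (forall i, psi i <= 0 -> c i <= 0) ->
  exists q, [/\ convw A q, \sum_i q i * psi i = 0 & 0 < \sum_i q i * c i].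
Proof.
move=> hl psi_le0 c_gt0 psi_c; case: (hl) => l0 lA l1.
pose lI i := if psi i <= 0 then l i else 0.
pose lO i := if psi i <= 0 then 0 else l i.
have [lI0 lO0] : (forall i, 0 <= lI i) /\ (forall i, 0 <= lO i).
  by split=> i; rewrite /lI /lO; case: ifP.
have split_l (f : 'I_n -> R) : \sum_i l i * f i = \sum_i lI i * f i + \sum_i lO i * f i.
  rewrite -big_split; apply: eq_bigr => i _; rewrite /lI /lO /=.
  by case: ifP; rewrite mul0r ?addr0 ?add0r.
pose mI := \sum_i lI i * 1; pose mO := \sum_i lO i * 1.
pose PI := \sum_i lI i * psi i; pose PO := \sum_i lO i * psi i.
pose GI := \sum_i lI i * c i; pose GO := \sum_i lO i * c i.
have PI_le0 : PI <= 0.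
  by apply: sumr_le0 => i _; rewrite /lI; case: ifP => h; rewrite ?mul0r // mulr_ge0_le0.
have GI_le0 : GI <= 0.
  by apply: sumr_le0 => i _; rewrite /lI; case: ifP => h; rewrite ?mul0r // mulr_ge0_le0 ?psi_c.
have GIO : 0 < GI + GO by rewrite /GI /GO -split_l.
have PO_gt0 : 0 < PO.
  have lO_psi i : lO i != 0 -> 0 < psi i.
    by rewrite /lO; case: ifP => [_|/negbT]; rewrite ?eqxx // -ltNge.
  rewrite lt_def sumr_ge0 => [|i _]; last by have [->|/lO_psi/ltW] := eqVneq (lO i) 0;
    rewrite ?mul0r // => /(mulr_ge0 (lO0 i)).
  rewrite andbT; apply: contraTneq GIO => PO0.
  by rewrite /GO (sum_pos_side_eq0 c lO0 lO_psi PO0) addr0 -leNgt.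
have [|||D_gt0 num_gt0] := @crossing_coefficients _ mI mO PI PO GI GO _ _ _ PO_gt0 GI_le0 GIO.
- by apply: sumr_ge0 => i _; rewrite mulr1.
- by rewrite /mI /mO -split_l; under eq_bigr do rewrite mulr1.
- by rewrite /PI /PO -split_l.
pose D := PO * mI - PI * mO; pose q i := (PO * lI i - PI * lO i) / D.
have sum_q (f : 'I_n -> R) :
    \sum_i q i * f i = (PO * \sum_i lI i * f i - PI * \sum_i lO i * f i) / D.
  transitivity (\sum_i (PO / D * (lI i * f i) - PI / D * (lO i * f i))).
    by apply: eq_bigr => i _; rewrite /q; ring.
  by rewrite sumrB -!mulr_sumr; ring.
exists q; split.
- split.
  + move=> i; apply: divr_ge0 (ltW D_gt0); rewrite subr_ge0.
    by apply: le_trans (mulr_ge0 (ltW PO_gt0) (lI0 i)); rewrite mulr_le0_ge0.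
  + by move=> i iA; rewrite /q /lI /lO lA //; case: ifP; rewrite !mulr0 subrr mul0r.
  + transitivity (\sum_i q i * 1); first by apply: eq_bigr => i _; rewrite mulr1.
    by rewrite sum_q -/mI -/mO divff ?gt_eqF.
- by rewrite sum_q -/PI -/PO [PO * _]mulrC subrr mul0r.
- by rewrite sum_q -/GI -/GO divr_gt0.
Qed.

Definition lies_below u s := forall l m, convw u l -> convw s m ->
  point_of l = point_of m -> moment l 3 <= moment m 3.

Lemma lies_below_upper_facet S u a b (psi : {poly R}) r : (size psi <= 3)%N ->
  (forall k, (k \in S) = (psi.[t k] <= 0)) -> [set a; b] \subset S ->
  (forall q, convw u q -> \sum_i q i * psi.[t i] = 0 ->
     exists2 m, convw [set a; b] m & point_of m = point_of q) ->
  lies_below u [set a; b] -> r \in upper_facets S -> lies_below u r.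
Proof.
move=> size_psi S_psi /subsetP abS chord hab hr l m hl hm e.
have r3 := upper_facet_card hr.
rewrite leNgt; apply/negP => above.
have l_c : 0 < \sum_i l i * (nodal r).[t i].
  by rewrite (sum_nodal3_height r3 hl hm e) subr_gt0.
have l_psi : \sum_i l i * psi.[t i] <= 0.
  rewrite (sum_horner_eq size_psi (convw_low_moments hl hm e)).
  by apply: convw_sum_le0 hm _ => k /(subsetP (upper_facet_sub hr)); rewrite S_psi.
have psi_c i : psi.[t i] <= 0 -> (nodal r).[t i] <= 0.
  by rewrite -S_psi; exact: upper_facet_le0 hr i.
have [q [hq q_psi q_c]] := convex_crossing hl l_psi l_c psi_c.
have [m' hm' e'] := chord q hq q_psi.
have q_below := hab q m' hq hm' (esym e').
have gap := sum_nodal3B r3 (convw_low_moments hq hm' (esym e')).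
have m'_c : \sum_i m' i * (nodal r).[t i] <= 0.
  by apply: convw_sum_le0 hm' _ => k /abS; exact: upper_facet_le0 hr k.
move: q_c; rewrite ltNge; apply/negP; lra.
Qed.

Lemma chord_sub_inner a b : (a <= b)%N -> [set a; b] \subset inner a b.
Proof. by move=> ab; rewrite subUset !sub1set !inE !leqnn ab. Qed.

Lemma chord_sub_outer a b : [set a; b] \subset outer a b.
Proof. by rewrite subUset !sub1set !inE !leqnn orbT. Qed.

Lemma lies_below_inner_facet u s a b r : (a < b)%N -> [set a; b] \subset s ->
  lies_below u s -> r \in upper_facets (inner a b) -> lies_below u r.
Proof.
move=> ab abs hs; apply: (lies_below_upper_facet (S := inner a b) (size_nodal2 a b)).
- by move=> k; rewrite inner_nodal2.
- exact/chord_sub_inner/ltnW.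
- move=> q hq q0; apply: on_chord ab _ _ (convwS (subsetUl u [set a; b]) hq) q0;
    by rewrite !inE eqxx ?orbT.
- by move=> l m hl hm; apply: hs hl (convwS abs hm).
Qed.

Lemma lies_below_outer_facet u s a b r : (a < b)%N -> [set a; b] \subset s ->
  lies_below u s -> r \in upper_facets (outer a b) -> lies_below u r.
Proof.
move=> ab abs hs; apply: (lies_below_upper_facet (S := outer a b) (psi := - nodal [set a; b])).
- by rewrite size_opp size_nodal2.
- by move=> k; rewrite outer_nodal2 // hornerN oppr_le0.
- exact: chord_sub_outer.
- move=> q hq; under eq_bigr do rewrite hornerN mulrN.
  rewrite sumrN => /eqP; rewrite oppr_eq0 => /eqP.
  apply: on_chord ab _ _ (convwS (subsetUl u [set a; b]) hq); by rewrite !inE eqxx ?orbT.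
- by move=> l m hl hm; apply: hs hl (convwS abs hm).
Qed.

Lemma lies_below_of_not_overlap u s : (#|u| <= 3)%N -> (#|s| <= 3)%N ->
  ~ overlap t u s \/ below3 t u s -> lies_below u s.
Proof.
move=> u3 s3 [no_overlap|[_ below]] l m hl hm e; last first.
  by apply: (below (point_of l)); [exists l | exists m; rewrite e].
have [w [hw ew]] : in_conv t (u :&: s) (point_of l).
  apply: NNPP => notin; apply: no_overlap; split.
    by move=> p hp; split; apply: in_convS hp; [apply: subsetIl | apply: subsetIr].
  by exists (point_of l); split=> //; [exists l | exists m; rewrite e].
have lw := convw_point_inj u3 hl (convwS (subsetIl _ _) hw) ew.
have mw := convw_point_inj s3 hm (convwS (subsetIr _ _) hw) (etrans (esym e) ew).
suff -> : moment l 3 = moment m 3 by [].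
by apply: eq_bigr => i _; rewrite lw mw.
Qed.

Lemma le3T_of_lies_below u T : {in T, forall r, lies_below u r} -> le3T t u T.
Proof. by move=> h r rT p y z [l [hl -> ->]] [m [hm e ->]]; exact: h rT l m hl hm e. Qed.

Lemma is_triangulationI T : {in T, forall r, #|r| = 3} ->
  (forall l, convw setT l -> exists2 r, r \in T & in_conv t r (point_of l)) ->
  {in T &, forall r r', r != r' -> meet_in_face r r'} -> is_triangulation t T.
Proof.
move=> T3 cover faces; split=> //.
- move=> p; split=> [[l [hl ->]]|[r _]]; first exact: cover.
  by apply: in_convS; apply: subsetT.
- by move=> r r' rT r'T rr'; apply/meet_in_face_no_overlap/faces.
Qed.

Lemma cover_by_piece T S a b r0 l : a != b -> a \in S -> b \in S ->
  [set a; b] \subset r0 -> r0 \in T -> upper_facets S \subset T -> convw S l ->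
  exists2 r, r \in T & in_conv t r (point_of l).
Proof.
move=> ab aS bS abr0 r0T UT hl; case: (leqP 3 #|S|) => [S3|S2].
  by have [r /(subsetP UT) rT hr] := upper_facets_cover S3 hl; exists r.
exists r0 => //; exists l; split=> //; apply: convwS hl.
exact: subset_trans (small_set_sub2 ab aS bS _) abr0.
Qed.

Lemma upper_facet_through_chord S a b : (a < b)%N -> a \in S -> b \in S ->
  (S \subset inner a b) || (S \subset outer a b) -> (3 <= #|S|)%N ->
  exists2 r, r \in upper_facets S & [set a; b] \subset r.
Proof.
move=> ab aS bS side S3.
pose w j : R := (j == a)%:R / 2 + (j == b)%:R / 2.
have hw : convw [set a; b] w.
  split=> [j|j|]; first by rewrite addr_ge0 ?divr_ge0.
    by rewrite /w !inE negb_or => /andP[/negbTE-> /negbTE->]; rewrite mul0r addr0.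
  by rewrite big_split /= !(sum_indicator _ (fun=> 2^-1)) [RHS](splitr 1) div1r.
have abS : [set a; b] \subset S by rewrite subUset !sub1set aS bS.
have [r hr [m [hm e]]] := upper_facets_cover S3 (convwS abS hw).
have w0 : \sum_i w i * (nodal [set a; b]).[t i] = 0.
  apply: big1 => i _; case: (boolP (i \in [set a; b])) => iab; first by rewrite nodal_root ?mulr0.
  by rewrite (convw_out hw iab) mul0r.
have m0 : \sum_i m i * (nodal [set a; b]).[t i] = 0.
  by rewrite -(sum_horner_eq (size_nodal2 a b) (convw_low_moments hw hm e)).
have side_r : (r \subset inner a b) || (r \subset outer a b).
  by case/orP: side => /(subset_trans (upper_facet_sub hr)) ->; rewrite ?orbT.
have hm' := convw_chord ab side_r hm m0.
have wm : w =1 m.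
  exact: convw_point_inj (leqW (cards2_le a b)) hw (convwS (subsetIr _ _) hm') e.
have in_r j : w j != 0 -> j \in r by rewrite wm => /(convw_mem hm'); rewrite inE => /andP[].
have [ab' ba'] : (a == b) = false /\ (b == a) = false.
  by split; [|rewrite eq_sym]; apply/negbTE/ltn_ord_neq.
have w_a : w a != 0 by rewrite /w eqxx ab' /= mul0r addr0 div1r invr_eq0 pnatr_eq0.
have w_b : w b != 0 by rewrite /w eqxx ba' /= mul0r add0r div1r invr_eq0 pnatr_eq0.
by exists r => //; rewrite subUset !sub1set !in_r.
Qed.

Lemma chord_piece_large a b : (3 <= n)%N -> (a < b)%N ->
  (3 <= #|inner a b|)%N || (3 <= #|outer a b|)%N.
Proof.
move=> n3 ab; case: (ltnP a.+1 b) => [a1b|ba1].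
  pose x := Ordinal (ltn_trans a1b (ltn_ord b)).
  have ax : (a < x)%N by [].
  apply/orP; left; apply: leq_trans (subset_leq_card (_ : [set a; x; b] \subset _)).
    by rewrite card3_set.
  by apply/subsetP => k; rewrite !inE -orbA => /or3P[]/eqP->; rewrite ?leqnn ltnW // ltnW.
suff -> : outer a b = setT by rewrite cardsT card_ord n3 orbT.
by apply/setP => k; rewrite !inE; lia.
Qed.

Definition edge_triangulation a b :=
  upper_facets (inner a b) :|: upper_facets (outer a b).

Lemma edge_triangulationP a b : (3 <= n)%N -> (a < b)%N ->
  [/\ is_triangulation t (edge_triangulation a b), simplex_of [set a; b] (edge_triangulation a b) &
      forall u, lies_below u [set a; b] -> le3T t u (edge_triangulation a b)].
Proof.
move=> n3 ab; set T := edge_triangulation a b.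
have [aI bI] : a \in inner a b /\ b \in inner a b by rewrite !inE !leqnn ltnW.
have [aO bO] : a \in outer a b /\ b \in outer a b by rewrite !inE !leqnn orbT.
have IT : upper_facets (inner a b) \subset T by apply: subsetUl.
have OT : upper_facets (outer a b) \subset T by apply: subsetUr.
have [r0 r0T abr0] : exists2 r0, r0 \in T & [set a; b] \subset r0.
  case/orP: (chord_piece_large n3 ab) => large.
  - have [|r hr abr] := upper_facet_through_chord ab aI bI _ large; first by rewrite subxx.
    by exists r => //; apply: (subsetP IT).
  - have [|r hr abr] := upper_facet_through_chord ab aO bO _ large; first by rewrite subxx orbT.
    by exists r => //; apply: (subsetP OT).
split=> [||u hu].
- apply: is_triangulationI.
  + by move=> r; rewrite in_setU => /orP[]/upper_facet_card.
  + move=> l hl; have [l' [e [hl'|hl']]] := split_chord ab (in_setT a) (in_setT b) hl.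
    * have [r rT hr] := cover_by_piece (ltn_ord_neq ab) aI bI abr0 r0T IT
                            (convwS (subsetIr _ _) hl').
      by exists r; rewrite // -e.
    * have [r rT hr] := cover_by_piece (ltn_ord_neq ab) aO bO abr0 r0T OT
                            (convwS (subsetIr _ _) hl').
      by exists r; rewrite // -e.
  + move=> r r'; rewrite !in_setU => /orP[hr|hr] /orP[hr'|hr'] _.
    * exact: upper_facets_meet_in_face hr hr'.
    * exact: meet_in_face_chord ab (upper_facet_sub hr) (upper_facet_sub hr').
    * exact/meet_in_face_sym/(meet_in_face_chord ab (upper_facet_sub hr') (upper_facet_sub hr)).
    * exact: upper_facets_meet_in_face hr hr'.
- by exists r0.
- apply: le3T_of_lies_below => r; rewrite in_setU => /orP[hr|hr].
  + exact: lies_below_inner_facet ab (subxx _) hu hr.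
  + exact: lies_below_outer_facet ab (subxx _) hu hr.
Qed.

Definition triangle_triangulation a b c :=
  [set a; b; c] |: (upper_facets (inner a b) :|: upper_facets (inner b c)
                    :|: upper_facets (outer a c)).

Lemma inner_subset a b a' b' : (a' <= a)%N -> (b <= b')%N -> inner a b \subset inner a' b'.
Proof. by move=> a'a bb'; apply/subsetP => k; rewrite !inE; lia. Qed.

Lemma outer_subset a b a' b' : (a <= a')%N -> (b' <= b)%N -> outer a b \subset outer a' b'.
Proof. by move=> aa' b'b; apply/subsetP => k; rewrite !inE; lia. Qed.

Lemma inner_sub_outer a b a' b' : (b <= a')%N || (b' <= a)%N -> inner a b \subset outer a' b'.
Proof. by move=> h; apply/subsetP => k; rewrite !inE; lia. Qed.

Lemma triangle_remainder a b c k : (a < b)%N -> (b < c)%N ->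
  k \in inner a c -> k \in outer a b -> k \in outer b c -> k \in [set a; b; c].
Proof. by rewrite !inE -!val_eqE /=; lia. Qed.

Section Triangle.
Variables a b c : 'I_n.
Hypotheses (ab : (a < b)%N) (bc : (b < c)%N).
Let ac : (a < c)%N := ltn_trans ab bc.
Local Notation T := (triangle_triangulation a b c).

Let sigma_in_T : [set a; b; c] \in T.
Proof. exact: setU11. Qed.

Let facets_in_T : [/\ upper_facets (inner a b) \subset T,
  upper_facets (inner b c) \subset T & upper_facets (outer a c) \subset T].
Proof. by split; apply/subsetP => r hr; rewrite !in_setU hr ?orbT. Qed.

Let edge_sub_sigma x y : x \in [set a; b; c] -> y \in [set a; b; c] ->
  [set x; y] \subset [set a; b; c].
Proof. by move=> xs ys; rewrite subUset !sub1set xs. Qed.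

Let sigma_mem : [/\ a \in [set a; b; c], b \in [set a; b; c] & c \in [set a; b; c]].
Proof. by rewrite !inE !eqxx ?orbT. Qed.

Lemma triangle_triangulation_cover l : convw setT l ->
  exists2 r, r \in T & in_conv t r (point_of l).
Proof.
have [sa sb sc] := sigma_mem.
have [abT bcT acT] := facets_in_T.
have piece S x y : upper_facets S \subset T -> (x < y)%N ->
    x \in [set a; b; c] -> y \in [set a; b; c] -> x \in S -> y \in S ->
    forall l', convw S l' -> exists2 r, r \in T & in_conv t r (point_of l').
  move=> hS xy xs ys xS yS l' hl'.
  exact: cover_by_piece (ltn_ord_neq xy) xS yS (edge_sub_sigma xs ys) sigma_in_T hS hl'.
have [lab lbc lac] := And3 (ltnW ab) (ltnW bc) (ltnW ac).
have [aO cO] : a \in outer a c /\ c \in outer a c by rewrite !inE !leqnn orbT.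
have [aI bI cI] : [/\ a \in inner a c, b \in inner a c & c \in inner a c].
  by rewrite !inE !leqnn lab lbc lac.
have [aIab bIab bObc cObc] :
    [/\ a \in inner a b, b \in inner a b, b \in outer a b & c \in outer a b].
  by rewrite !inE !leqnn lab lbc !orbT.
have [bIbc cIbc] : b \in inner b c /\ c \in inner b c by rewrite !inE !leqnn lbc.
move=> hl; have [l1 [e1 [h1|h1]]] := split_chord ac (in_setT a) (in_setT c) hl; last first.
  have [r rT hr] := piece _ _ _ acT ac sa sc aO cO _ (convwS (subsetIr _ _) h1).
  by exists r; rewrite // -e1.
have in_ac k : k \in inner a c -> k \in setT :&: inner a c by rewrite in_setI in_setT.
have [l2 [e2 [h2|h2]]] := split_chord ab (in_ac _ aI) (in_ac _ bI) h1.
  have [r rT hr] := piece _ _ _ abT ab sa sb aIab bIab _ (convwS (subsetIr _ _) h2).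
  by exists r; rewrite // -e1 -e2.
have in_ac_ab k : k \in inner a c -> k \in outer a b -> k \in setT :&: inner a c :&: outer a b.
  by move=> kI kO; rewrite in_setI kO in_ac.
have [l3 [e3 [h3|h3]]] := split_chord bc (in_ac_ab _ bI bObc) (in_ac_ab _ cI cObc) h2.
  have [r rT hr] := piece _ _ _ bcT bc sb sc bIbc cIbc _ (convwS (subsetIr _ _) h3).
  by exists r; rewrite // -e1 -e2 -e3.
exists [set a; b; c] => //; exists l3; split; last by rewrite -e1 -e2 -e3.
apply: convwS h3; apply/subsetP => k; rewrite !in_setI in_setT /= => /andP[/andP[kI kOab] kObc].
exact: triangle_remainder ab bc kI kOab kObc.
Qed.

Let triangle_mem r : r \in T -> [\/ r = [set a; b; c], r \in upper_facets (inner a b),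
  r \in upper_facets (inner b c) | r \in upper_facets (outer a c)].
Proof.
by rewrite in_setU1 !in_setU -orbA => /or4P[/eqP|||];
  [constructor 1 | constructor 2 | constructor 3 | constructor 4].
Qed.

Let sigma_sub : [/\ [set a; b; c] \subset outer a b, [set a; b; c] \subset outer b c
  & [set a; b; c] \subset inner a c].
Proof.
have [lab lbc lac] := And3 (ltnW ab) (ltnW bc) (ltnW ac).
by rewrite !subUset !sub1set !inE !leqnn lab lbc lac !orbT.
Qed.

Lemma triangle_triangulation_faces : {in T &, forall r r', r != r' -> meet_in_face r r'}.
Proof.
have [lab lbc lac] := And3 (ltnW ab) (ltnW bc) (ltnW ac).
have [s_ab s_bc s_ac] := sigma_sub.
have reg_ab : {in T, forall r, (r \in upper_facets (inner a b)) || (r \subset outer a b)}.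
  move=> r /triangle_mem[->|->|/upper_facet_sub rS|/upper_facet_sub rS] //; rewrite ?s_ab ?orbT //.
    by rewrite (subset_trans rS) ?orbT // inner_sub_outer // leqnn orbT.
  by rewrite (subset_trans rS) ?orbT // outer_subset.
have reg_bc : {in T, forall r, (r \in upper_facets (inner b c)) || (r \subset outer b c)}.
  move=> r /triangle_mem[->|/upper_facet_sub rS|->|/upper_facet_sub rS] //; rewrite ?s_bc ?orbT //.
    by rewrite (subset_trans rS) ?orbT // inner_sub_outer // leqnn.
  by rewrite (subset_trans rS) ?orbT // outer_subset.
have reg_ac : {in T, forall r, (r \in upper_facets (outer a c)) || (r \subset inner a c)}.
  move=> r /triangle_mem[->|/upper_facet_sub rS|/upper_facet_sub rS|->] //; rewrite ?s_ac ?orbT //.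
    by rewrite (subset_trans rS) ?orbT // inner_subset.
  by rewrite (subset_trans rS) ?orbT // inner_subset.
move=> r r' rT r'T rr'.
have [h|/norP[r1 r'1]] :=
  boolP ((r \in upper_facets (inner a b)) || (r' \in upper_facets (inner a b))).
  by apply: (meet_in_face_region reg_ab _ rT r'T h) => A B; apply: meet_in_face_chord ab.
have [h|/norP[r2 r'2]] :=
  boolP ((r \in upper_facets (inner b c)) || (r' \in upper_facets (inner b c))).
  by apply: (meet_in_face_region reg_bc _ rT r'T h) => A B; apply: meet_in_face_chord bc.
have [h|/norP[r3 r'3]] :=
  boolP ((r \in upper_facets (outer a c)) || (r' \in upper_facets (outer a c))).
  apply: (meet_in_face_region reg_ac _ rT r'T h) => A B AO BI.
  exact/meet_in_face_sym/(meet_in_face_chord ac BI AO).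
have sigma_of r0 : r0 \in T -> r0 \notin upper_facets (inner a b) ->
    r0 \notin upper_facets (inner b c) -> r0 \notin upper_facets (outer a c) ->
    r0 = [set a; b; c].
  by case/triangle_mem=> [//|h|h|h] n1 n2 n3; [move: n1|move: n2|move: n3]; rewrite h.
by move: rr'; rewrite (sigma_of r) // (sigma_of r') // eqxx.
Qed.

Lemma triangle_triangulationP :
  [/\ is_triangulation t T, simplex_of [set a; b; c] T &
      forall u, lies_below u [set a; b; c] -> le3T t u T].
Proof.
have [sa sb sc] := sigma_mem.
split=> [||u hu].
- apply: is_triangulationI triangle_triangulation_cover triangle_triangulation_faces.
  move=> r /triangle_mem[->|/upper_facet_card|/upper_facet_card|/upper_facet_card] //.
  exact: card3_set.
- by exists [set a; b; c].
- apply: le3T_of_lies_below => r /triangle_mem[->|hr|hr|hr] //.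
  + exact: lies_below_inner_facet ab (edge_sub_sigma sa sb) hu hr.
  + exact: lies_below_inner_facet bc (edge_sub_sigma sb sc) hu hr.
  + exact: lies_below_outer_facet ac (edge_sub_sigma sa sc) hu hr.
Qed.

End Triangle.

End MomentCurve.

Theorem theorem3p1 (R : realType) (n : nat) (t : 'I_n -> R)
    (ht : forall i j : 'I_n, (i < j)%N -> t i < t j) (hn : (3 <= n)%N)
    (s : {set 'I_n}) (hs : edge_or_triangle s) :
  exists T : {set {set 'I_n}},
    [/\ is_triangulation t T, simplex_of s T &
        forall u : {set 'I_n}, edge_or_triangle u -> u != s ->
          (~ overlap t u s \/ below3 t u s) -> le3T t u T].
Proof.
have below_s u : edge_or_triangle u -> ~ overlap t u s \/ below3 t u s -> lies_below t u s.
  by move=> hu; apply: (lies_below_of_not_overlap ht); [case: hu => -> | case: hs => ->].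
suff [T [hT sT below_T]] : exists T, [/\ is_triangulation t T, simplex_of s T &
    forall u, lies_below t u s -> le3T t u T].
  by exists T; split=> // u hu _ /(below_s u hu) /below_T.
case: hs => [/eqP/cards2P[x [y [xy ->]]] | /card3_sorted[x [y [z [xy yz ->]]]]].
- case: (ltngtP x y) => [x_y|y_x|/val_inj x_y]; last by rewrite x_y eqxx in xy.
  + by exists (edge_triangulation t x y); apply: edge_triangulationP.
  + by rewrite setUC; exists (edge_triangulation t y x); apply: edge_triangulationP.
- by exists (triangle_triangulation t x y z); apply: triangle_triangulationP.
Qed.
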